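(* Let $\alpha\in\mathbb{N}_0$. For $k\in\mathbb{N}$ let $\Gamma_k^{(\alpha)}$ have density $L_\alpha^{(k-\alpha-1)}(x)^2x^{k-\alpha-1}e^{-x}\mathbf{1}_{x\ge0}$ and let $\Gamma_k$ be gamma-distributed with shape $k$ and rate $1$. Then for all $k\in\mathbb{N}$ and $R>0$ with $k\ge R>2\alpha+2$, \[ \mathbb{P}\bigl[\Gamma_k^{(\alpha)}\le R\bigr]\le3^{2\alpha+1}R^{\alpha+1}\,\mathbb{P}\bigl[\Gamma_{k-2\alpha-2}\le R\bigr], \] and for all $k\in\mathbb{N}$ and $R$ with $1\le k\le R$, \[ \mathbb{P}\bigl[\Gamma_k^{(\alpha)}\ge R\bigr]\le4^\alpha k^\alpha\,\mathbb{P}\bigl[\Gamma_{k+\alpha}\ge R\bigr]. \]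
   Context: For $\beta\ge-\alpha$, $L_\alpha^{(\beta)}$ is the generalized Laguerre polynomial of degree $\alpha$ normalized so that $\int_0^\infty L_\alpha^{(\beta)}(x)^2x^\beta e^{-x}\mathrm{d}x=1$; explicitly $L_\alpha^{(\beta)}(x)=\sqrt{\frac{\alpha!}{\Gamma(\beta+\alpha+1)}}\sum_{\ell=0}^\alpha\binom{\alpha+\beta}{\alpha-\ell}\frac{(-x)^\ell}{\ell!}$ (up to sign). *)

From HB Require Import structures.
From mathcomp Require Import all_boot all_order all_algebra.
From mathcomp Require Import all_classical all_reals all_analysis.
Set Implicit Arguments. Unset Strict Implicit. Unset Printing Implicit Defensive.
Import Order.TTheory GRing.Theory Num.Theory.
Import numFieldNormedType.Exports.
Local Open Scope classical_set_scope.
Local Open Scope ring_scope.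

(* Normalized generalized Laguerre polynomial L_a^{(b)} for an integer
   parameter b >= -a (the only case needed: b = k - a - 1 with k >= 1).
   For integer b, Gamma(b+a+1) = (a+b)! and binom(a+b, a-l) is the usual
   binomial coefficient of the natural number a+b. *)
Definition laguerre {R : realType} (a : nat) (b : int) (x : R) : R :=
  let n := `|(a%:Z + b)%R|%N in
  Num.sqrt ((a`!)%:R / (n`!)%:R) *
  \sum_(l < a.+1) ('C(n, a - l))%:R * (- x) ^+ l / (l`!)%:R.

Definition dens_lag {R : realType} (a k : nat) (x : R) : R :=
  if 0 <= x then
    (laguerre a (k%:Z - a%:Z - 1) x) ^+ 2 * x ^ (k%:Z - a%:Z - 1) * expR (- x)
  else 0.

Definition dens_gamma {R : realType} (k : nat) (x : R) : R :=
  if 0 <= x then x ^+ k.-1 * expR (- x) / ((k.-1)`!)%:R else 0.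

Definition prob_le {R : realType} (f : R -> R) (r : R) : \bar R :=
  (\int[@lebesgue_measure R]_(x in `]-oo, r]) (f x)%:E)%E.
Definition prob_ge {R : realType} (f : R -> R) (r : R) : \bar R :=
  (\int[@lebesgue_measure R]_(x in `[r, +oo[) (f x)%:E)%E.

From HB Require Import structures.
(* Rstruct also proves lemmas named expR0, expRD, ... about Stdlib's exp, so it
   is imported before the analysis library, whose names must take precedence. *)
From mathcomp Require Import Rstruct.
From mathcomp Require Import all_boot all_order all_algebra.
From mathcomp Require Import all_classical all_reals all_analysis measurable_realfun.
From mathcomp Require Import zify ring lra.
Set Implicit Arguments.
Unset Strict Implicit.
Unset Printing Implicit Defensive.
Import Order.TTheory GRing.Theory Num.Theory.
Local Open Scope ring_scope.

(* Expanding the Laguerre polynomial and using binom(n, j) j! <= n^j gives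
   L_a^(k-a-1)(x)^2 <= 4^a y^(2a) / ((k-1)! a!) as soon as |x| <= y and
   k - 1 <= y, so both tail bounds follow from pointwise comparisons of the
   densities.  On [0, R] take y = k and use x^(a+2) <= R^(a+1) k; what is left is
   4^a k^(2a+1) (k-2a-3)! <= 3^(2a+1) a! (k-1)!, proved by induction on k from
   k = 2a+3, where it holds by induction on a since (1 + 2/m)^m <= e^2 <= 9.
   On [R, oo) take y = x; what is left is (k+a-1)! <= k^a a! (k-1)!. *)

Lemma bin_fact_leq_expn n j : ('C(n, j) * j`! <= n ^ j)%N.
Proof.
rewrite bin_ffact; elim: j => [|j IH]; first by rewrite ffactn0.
by rewrite ffactnSr expnSr leq_mul ?leq_subr.
Qed.

Lemma fact_addn_leq n a : ((n + a)`! <= n.+1 ^ a * a`! * n`!)%N.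
Proof.
elim: a => [|a IH]; first by rewrite addn0 expn0 fact0 !mul1n.
rewrite addnS factS expnS factS.
have -> : (n.+1 * n.+1 ^ a * (a.+1 * a`!) * n`!
           = (n.+1 * a.+1) * (n.+1 ^ a * a`! * n`!))%N by ring.
by apply: leq_mul; [nia | exact: IH].
Qed.

Lemma bernoulli_leq m n : ((m + n).+1 ^ n * m <= (m + n) ^ n.+1)%N.
Proof.
elim: n m => [|n IH] m; first by rewrite addn0 expn0 expn1 mul1n.
have := IH m.+1; rewrite addSn addnS => IHm.
rewrite -(leq_pmul2r (ltn0Sn m)).
have -> : ((m + n).+2 ^ n.+1 * m * m.+1
           = ((m + n).+2 ^ n * m.+1) * ((m + n).+2 * m))%N by rewrite expnS; ring.
have -> : ((m + n).+1 ^ n.+2 * m.+1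
           = (m + n).+1 ^ n.+1 * ((m + n).+1 * m.+1))%N by rewrite (expnS _ n.+1); ring.
by apply: leq_mul; [exact: IHm | nia].
Qed.

Lemma expR2_le9 (R : realType) : expR (2 : R) <= 9.
Proof.
have e16_ge : 5 / 6 <= expR (- (1 / 6) : R) by have := expR_ge1Dx (- (1 / 6) : R); lra.
have e16_le : expR (1 / 6 : R) <= 6 / 5.
  have := expR_gt0 (1 / 6 : R).
  have : expR (1 / 6 : R) * expR (- (1 / 6)) = 1 by rewrite -expRD subrr expR0.
  nra.
have -> : (2 : R) = 12%:R * (1 / 6) by lra.
rewrite expRM_natl; apply: le_trans (lerXn2r 12 _ _ e16_le) _; rewrite ?nnegrE ?expR_ge0 //; lra.
Qed.

Lemma addn2_expn_leq m : ((m + 2) ^ m <= 9 * m ^ m)%N.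
Proof.
case: m => [//|m]; rewrite -(ler_nat Rdefinitions.R) natrM !natrX natrD.
set M : Rdefinitions.R := m.+1%:R.
have M0 : 0 < M by rewrite ltr0n.
have -> : M + 2%:R = M * (1 + 2 / M) by field; rewrite gt_eqF.
rewrite exprMn mulrC ler_pM2r ?exprn_gt0 //.
have M20 : 0 <= 2 / M by rewrite divr_ge0 // ltW.
apply: le_trans (lerXn2r _ _ _ (expR_ge1Dx (2 / M))) _; rewrite ?nnegrE ?expR_ge0 //.
  by rewrite addr_ge0.
by rewrite -expRM_natl mulrC divfK ?gt_eqF // expR2_le9.
Qed.

Lemma fact_ratio_base a :
  (4 ^ a * (2 * a + 3) ^ (2 * a + 1) <= 3 ^ (2 * a + 1) * a`! * (2 * a + 2)`!)%N.
Proof.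
elim: a => [//|a IH].
(* The induction step uses 4 m <= (a + 1) (m + 1), which needs a >= 3. *)
have [a_le2|a_gt2] := leqP a 2.
  case: a a_le2 {IH} => [|[|[|a]]] a_le2; last by exfalso; move: a_le2.
  - by rewrite -[(2 * 1 + 2)%N]/4%N !factS fact0; lia.
  - by rewrite -[(2 * 2 + 2)%N]/6%N !factS fact0; lia.
  - by rewrite -[(2 * 3 + 2)%N]/8%N !factS fact0; lia.
set m := (2 * a + 3)%N in IH *.
have m_pow := addn2_expn_leq m.
rewrite (_ : 2 * a.+1 + 3 = m + 2)%N; last lia.
rewrite (_ : 2 * a.+1 + 1 = m)%N; last lia.
rewrite (_ : (2 * a.+1 + 2)`! = m.+1 * m * (2 * a + 2)`!)%N; last first.
  by rewrite (_ : 2 * a.+1 + 2 = (2 * a + 2).+2)%N; [rewrite 2!factS /m; ring | lia].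
rewrite (_ : 3 ^ m = 3 ^ 2 * 3 ^ (2 * a + 1))%N; last by rewrite -expnD /m; congr (_ ^ _)%N; lia.
rewrite (_ : m ^ m = m ^ 2 * m ^ (2 * a + 1))%N in m_pow; last by rewrite -expnD {1}/m; congr (_ ^ _)%N; lia.
have m_le : (4 * m <= a.+1 * m.+1)%N by rewrite /m; nia.
apply: leq_trans (_ : 4 * 4 ^ a * (9 * (m ^ 2 * m ^ (2 * a + 1))) <= _)%N.
  by rewrite expnS leq_mul2l m_pow orbT.
rewrite (_ : 4 * 4 ^ a * (9 * (m ^ 2 * m ^ (2 * a + 1)))
             = 9 * (4 * m) * m * (4 ^ a * m ^ (2 * a + 1)))%N; last ring.
rewrite (_ : 3 ^ 2 * 3 ^ (2 * a + 1) * a.+1`! * (m.+1 * m * (2 * a + 2)`!)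
             = 9 * (a.+1 * m.+1) * m * (3 ^ (2 * a + 1) * a`! * (2 * a + 2)`!))%N;
  last by rewrite factS; ring.
apply: leq_mul; last exact: IH.
by rewrite leq_mul2r leq_mul2l m_le !orbT.
Qed.

Lemma fact_ratio_leq a n :
  (4 ^ a * (n + (2 * a + 2)).+1 ^ (2 * a + 1) * n`!
     <= 3 ^ (2 * a + 1) * a`! * (n + (2 * a + 2))`!)%N.
Proof.
elim: n => [|n IH]; first by rewrite !add0n fact0 muln1 -addnS fact_ratio_base.
set k := (n + (2 * a + 2)).+1 in IH *.
have bern := bernoulli_leq n.+2 (2 * a + 1).
rewrite (_ : n.+2 + (2 * a + 1) = k)%N in bern; last lia.
rewrite !addSn -/k factS.
apply: leq_trans (_ : 4 ^ a * n`! * (k * k ^ (2 * a + 1)) <= _)%N.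
  rewrite (_ : 4 ^ a * k.+1 ^ (2 * a + 1) * (n.+1 * n`!)
               = 4 ^ a * n`! * (k.+1 ^ (2 * a + 1) * n.+1))%N; last ring.
  rewrite leq_mul2l -expnS (leq_trans _ bern) ?orbT //.
  by rewrite leq_mul2l leqnSn orbT.
rewrite (_ : 4 ^ a * n`! * (k * k ^ (2 * a + 1))
             = k * (4 ^ a * k ^ (2 * a + 1) * n`!))%N; last ring.
rewrite (_ : 3 ^ (2 * a + 1) * a`! * (k * (n + (2 * a + 2))`!)
             = k * (3 ^ (2 * a + 1) * a`! * (n + (2 * a + 2))`!))%N; last ring.
by rewrite leq_mul2l IH orbT.
Qed.

Section pointwise_bounds.
Variable R : realType.

Let ler_of_eq (x y : R) : x = y -> x <= y.
Proof. by move->. Qed.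

Lemma norm_laguerre_sum_le n a (x y : R) : n%:R <= y -> `|x| <= y ->
  `|\sum_(l < a.+1) ('C(n, a - l))%:R * (- x) ^+ l / (l`!)%:R|
    <= (2 * y) ^+ a / (a`!)%:R.
Proof.
move=> ny xy; have y0 : 0 <= y := le_trans (normr_ge0 x) xy.
have term_le (l : 'I_a.+1) : `|('C(n, a - l))%:R * (- x) ^+ l / (l`!)%:R|
    <= y ^+ a / (a`!)%:R * ('C(a, l))%:R.
  have la : (l <= a)%N by rewrite -ltnS.
  set j := (a - l)%N.
  have Cj : ('C(n, j))%:R * (j`!)%:R <= y ^+ j :> R.
    apply: le_trans (_ : (n ^ j)%:R <= _); first by rewrite -natrM ler_nat bin_fact_leq_expn.
    by rewrite natrX lerXn2r ?nnegrE.
  have xl : `|x| ^+ l <= y ^+ l by rewrite lerXn2r ?nnegrE.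
  have -> : y ^+ a / (a`!)%:R * ('C(a, l))%:R
            = y ^+ j * y ^+ l / ((j`!)%:R * (l`!)%:R).
    rewrite -(bin_fact la) -exprD subnK // !natrM -/j.
    by field; rewrite !pnatr_eq0 -!lt0n !fact_gt0 bin_gt0 la.
  rewrite !normrM normfV normrX normrN !normr_nat.
  rewrite (_ : ('C(n, j))%:R * `|x| ^+ l / (l`!)%:R
              = ('C(n, j))%:R * (j`!)%:R * `|x| ^+ l / ((j`!)%:R * (l`!)%:R));
    last by field; rewrite !pnatr_eq0 -!lt0n !fact_gt0.
  by rewrite ler_pM2r ?invr_gt0 ?mulr_gt0 // ler_pM ?mulr_ge0.
apply: le_trans (ler_norm_sum _ _ _) _; apply: le_trans (ler_sum _ (fun l _ => term_le l)) _.
have -> : \sum_(l < a.+1) y ^+ a / (a`!)%:R * ('C(a, l))%:R = (2 * y) ^+ a / (a`!)%:R.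
  rewrite -mulr_sumr exprMn mulrAC [2 ^+ a * _]mulrC; congr (_ * _ * _).
  by rewrite -[2 : R]/(1 + 1) exprD1n; apply: eq_bigr => l _; rewrite expr1n.
by [].
Qed.

Lemma laguerre_sqr_le a b n (x y : R) :
  `|(a%:Z + b)%R|%N = n -> n%:R <= y -> `|x| <= y ->
  laguerre a b x ^+ 2 <= 4 ^+ a * y ^+ (2 * a) / ((n`!)%:R * (a`!)%:R).
Proof.
move=> n_eq ny xy; rewrite /laguerre n_eq /= exprMn sqr_sqrtr ?divr_ge0 //.
set S := \sum_(l < a.+1) _.
have S_sqr : S ^+ 2 <= ((2 * y) ^+ a / (a`!)%:R) ^+ 2.
  have y0 : 0 <= y := le_trans (normr_ge0 x) xy.
  rewrite -real_normK ?num_real // lerXn2r ?nnegrE ?divr_ge0 ?exprn_ge0 ?mulr_ge0 //.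
  exact: norm_laguerre_sum_le.
apply: le_trans (ler_wpM2l _ S_sqr) _; first by rewrite divr_ge0.
have four_pow : ((2 * y) ^+ a) ^+ 2 = 4 ^+ a * y ^+ (2 * a).
  by rewrite mulnC exprM !exprMn exprAC; congr (_ ^+ _ * _); ring.
rewrite expr_div_n four_pow; apply: ler_of_eq.
by field; rewrite !pnatr_eq0 -!lt0n !fact_gt0.
Qed.

Lemma absz_laguerre_index a n : `|(a%:Z + (n.+1%:Z - a%:Z - 1))%R|%N = n.
Proof. by rewrite (_ : _ + _ = n%:Z) //; lia. Qed.

Lemma dens_lag_le_upper_tail a n (x : R) : n.+1%:R <= x ->
  dens_lag a n.+1 x <= 4 ^+ a * n.+1%:R ^+ a * dens_gamma (n.+1 + a) x.
Proof.
move=> nx; have x0 : 0 < x := lt_le_trans (ltr0Sn _ _) nx.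
have nx' : n%:R <= x by apply: le_trans nx; rewrite ler_nat.
have xx : `|x| <= x by rewrite ger0_norm ?(ltW x0).
have L_sqr := laguerre_sqr_le (absz_laguerre_index a n) nx' xx.
have pow_x : x ^+ (2 * a) * x ^ (n.+1%:Z - a%:Z - 1) = x ^+ (n + a).
  rewrite -[x ^+ (2 * a)]/(x ^ (2 * a)%:Z) -expfzDr ?gt_eqF //.
  by rewrite (_ : _ + _ = (n + a)%:Z) //; lia.
rewrite /dens_lag /dens_gamma (ltW x0).
set W := x ^+ (n + a) * expR (- x).
apply: le_trans (_ : 4 ^+ a / ((n`!)%:R * (a`!)%:R) * W <= _).
  apply: le_trans (ler_wpM2r (expR_ge0 _) (ler_wpM2r (exprz_ge0 _ (ltW x0)) L_sqr)) _.
  by apply: ler_of_eq; rewrite /W -pow_x; ring.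
rewrite [leRHS]mulrA [leRHS]mulrAC ler_wpM2r ?mulr_ge0 ?exprn_ge0 ?expR_ge0 ?(ltW x0) //.
rewrite -mulrA ler_wpM2l ?exprn_ge0 // ler_pdivlMr // mulrC ler_pdivrMr ?mulr_gt0 //.
rewrite -natrX -!natrM ler_nat (mulnC n`!) mulnA.
exact: fact_addn_leq.
Qed.

Lemma lower_tail_constant_le a n :
  4 ^+ a * (n + (2 * a + 2)).+1%:R ^+ (2 * a + 1)
    / (((n + (2 * a + 2))`!)%:R * (a`!)%:R)
  <= 3 ^+ (2 * a + 1) / (n`!)%:R :> R.
Proof.
rewrite ler_pdivrMr ?mulr_gt0 // mulrAC ler_pdivlMr //.
by rewrite [_ * a`!%:R]mulrC mulrA -!natrX -!natrM ler_nat fact_ratio_leq.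
Qed.

Lemma dens_lag_le_lower_tail a n (r x : R) :
  r <= (n + (2 * a + 2)).+1%:R -> x <= r ->
  dens_lag a (n + (2 * a + 2)).+1 x
    <= 3 ^+ (2 * a + 1) * r ^+ (a + 1) * dens_gamma n.+1 x.
Proof.
set N := (n + (2 * a + 2))%N => rk xr.
rewrite /dens_lag /dens_gamma -[n.+1.-1]/n; case: ifP => x0; last by rewrite mulr0.
have xk : `|x| <= N.+1%:R by rewrite ger0_norm // (le_trans xr rk).
have NN : N%:R <= N.+1%:R :> R by rewrite ler_nat.
have L_sqr := laguerre_sqr_le (absz_laguerre_index a N) NN xk.
set B := 4 ^+ a * _ / _ in L_sqr.
have pow_x : x ^ (N.+1%:Z - a%:Z - 1) = x ^+ (a + 1) * x * x ^+ n.
  rewrite (_ : _ - _ - _ = (a + 1 + 1 + n)%N%:Z); last by rewrite /N; lia.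
  by rewrite -[LHS]/(x ^+ (a + 1 + 1 + n)) !exprD expr1.
have pow_le : x ^+ (a + 1) * x <= r ^+ (a + 1) * N.+1%:R.
  by rewrite ler_pM ?exprn_ge0 ?lerXn2r ?nnegrE ?(le_trans xr rk) // (le_trans x0 xr).
set W := x ^+ n * expR (- x).
apply: le_trans (ler_wpM2r (expR_ge0 _) (ler_wpM2r (exprz_ge0 _ x0) L_sqr)) _.
apply: le_trans (_ : B * (r ^+ (a + 1) * N.+1%:R * x ^+ n) * expR (- x) <= _).
  rewrite pow_x ler_wpM2r ?expR_ge0 // ler_wpM2l ?divr_ge0 ?mulr_ge0 ?exprn_ge0 //.
  by rewrite ler_wpM2r ?exprn_ge0.
apply: le_trans (_ : 3 ^+ (2 * a + 1) / (n`!)%:R * (r ^+ (a + 1) * W) <= _); last first.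
  by apply: ler_of_eq; rewrite /W; ring.
apply: le_trans (_ : B * N.+1%:R * (r ^+ (a + 1) * W) <= _).
  by apply: ler_of_eq; rewrite /W /B; ring.
rewrite ler_wpM2r ?mulr_ge0 ?exprn_ge0 ?expR_ge0 ?(le_trans x0 xr) //.
apply: le_trans _ (lower_tail_constant_le a n).
by apply: ler_of_eq; rewrite /B /N addn1 exprSr; ring.
Qed.

End pointwise_bounds.

Section integral_bounds.
Local Open Scope classical_set_scope.
Variable R : realType.

Lemma measurable_inv : measurable_fun [set: R] (@GRing.inv R).
Proof.
rewrite -(setvU [set 0]).
apply/measurable_funU; [exact: measurableC (measurable_set1 _) | exact: measurable_set1 |].
split; last exact: measurable_fun_set1.
apply: open_continuous_measurable_fun.
  exact/closed_openC/accessible_closed_set1/hausdorff_accessible/Rhausdorff.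
by move=> x; rewrite inE => x0; apply: inv_continuous; apply/eqP.
Qed.

Lemma measurable_exprz (z : int) : measurable_fun [set: R] (fun x => x ^ z).
Proof.
case: z => n; first exact: exprn_measurable.
by apply: measurableT_comp measurable_inv _; exact: exprn_measurable.
Qed.

Lemma measurable_laguerre a b : measurable_fun [set: R] (laguerre a b).
Proof.
apply: measurable_funM => //; apply: measurable_sum => l.
by apply: measurable_funM => //; apply: measurable_funM => //; apply/measurable_funX/measurable_funN.
Qed.

Let measurable_ge0 : measurable_fun [set: R] (fun x => 0 <= x).
Proof. exact: measurable_fun_ler. Qed.

Let measurable_expRN : measurable_fun [set: R] (fun x => expR (- x)).
Proof.
apply: measurableT_comp (@measurable_expR R) _.
by apply: measurable_funN; exact: measurable_id.
Qed.

Lemma measurable_dens_lag a k : measurable_fun [set: R] (dens_lag a k).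
Proof.
apply: measurable_fun_ifT => //.
apply: measurable_funM; last exact: measurable_expRN.
apply: measurable_funM; last exact: measurable_exprz.
by apply: measurable_funX; exact: measurable_laguerre.
Qed.

Lemma measurable_dens_gamma m : measurable_fun [set: R] (dens_gamma m).
Proof.
apply: measurable_fun_ifT => //; apply: measurable_funM => //.
by apply: measurable_funM; [exact: exprn_measurable | exact: measurable_expRN].
Qed.

Lemma dens_lag_ge0 a k (x : R) : 0 <= dens_lag a k x.
Proof.
rewrite /dens_lag; case: ifP => // x0.
by rewrite mulr_ge0 ?expR_ge0 // mulr_ge0 ?sqr_ge0 ?exprz_ge0.
Qed.

Lemma dens_gamma_ge0 m (x : R) : 0 <= dens_gamma m x.
Proof.
rewrite /dens_gamma; case: ifP => // x0.
by rewrite mulr_ge0 ?invr_ge0 ?mulr_ge0 ?exprn_ge0 ?expR_ge0.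
Qed.

Lemma ge0_le_integral_scale d (T : measurableType d) (mu : {measure set T -> \bar R})
    (D : set T) (f g : T -> R) (c : R) :
  measurable D -> 0 <= c -> measurable_fun D f -> measurable_fun D g ->
  (forall x, D x -> 0 <= f x) -> (forall x, D x -> 0 <= g x) ->
  (forall x, D x -> f x <= c * g x) ->
  (\int[mu]_(x in D) (f x)%:E <= c%:E * \int[mu]_(x in D) (g x)%:E)%E.
Proof.
move=> mD c0 /measurable_EFinP mf /measurable_EFinP mg f0 g0 fg.
rewrite -ge0_integralZl //; apply: ge0_le_integral => //.
exact: emeasurable_funM (measurable_cst _) mg.
Qed.

Lemma integral_dens_lag_le a k m (D : set R) (c : R) : measurable D -> 0 <= c ->
  (forall x, D x -> dens_lag a k x <= c * dens_gamma m x) ->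
  (\int[@lebesgue_measure R]_(x in D) (dens_lag a k x)%:E
    <= c%:E * \int[@lebesgue_measure R]_(x in D) (dens_gamma m x)%:E)%E.
Proof.
move=> mD c0; apply: (@ge0_le_integral_scale _ _ (@lebesgue_measure R)) => //.
- exact: measurable_funTS (measurable_dens_lag a k).
- exact: measurable_funTS (measurable_dens_gamma m).
- by move=> x _; exact: dens_lag_ge0.
- by move=> x _; exact: dens_gamma_ge0.
Qed.

End integral_bounds.

Theorem lemma4p4 (R : realType) (a : nat) :
  (forall (k : nat) (r : R), (0 < k)%N -> (2 * a + 2)%:R < r -> r <= k%:R ->
     (prob_le (dens_lag a k) r
      <= (3 ^+ (2 * a + 1) * r ^+ (a + 1))%:E
         * prob_le (dens_gamma (k - (2 * a + 2))) r)%E) /\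
  (forall (k : nat) (r : R), (1 <= k)%N -> k%:R <= r ->
     (prob_ge (dens_lag a k) r
      <= (4 ^+ a * k%:R ^+ a)%:E * prob_ge (dens_gamma (k + a)) r)%E).
Proof.
split=> k r.
- move=> _ ar rk; have r0 : 0 <= r := le_trans (ler0n _ _) (ltW ar).
  have [n k_eq] : exists n, k = (n + (2 * a + 2)).+1.
    have : ((2 * a + 2)%:R < k%:R :> R) := lt_le_trans ar rk.
    by rewrite ltr_nat => ak; exists (k - (2 * a + 3))%N; lia.
  subst k.
  rewrite (_ : (n + (2 * a + 2)).+1 - (2 * a + 2) = n.+1)%N; last lia.
  apply: integral_dens_lag_le; first exact: measurable_itv.
    by rewrite mulr_ge0 ?exprn_ge0.
  by move=> x; rewrite /= in_itv /=; exact: dens_lag_le_lower_tail rk.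
- case: k => [//|n] _ nr.
  apply: integral_dens_lag_le; first exact: measurable_itv.
    by rewrite mulr_ge0 ?exprn_ge0.
  move=> x; rewrite /= in_itv /= andbT => rx.
  exact: dens_lag_le_upper_tail (le_trans nr rx).
Qed.
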